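(* There is an absolute constant $C>0$ such that for every integer $d\ge1$, every $\alpha>0$, every $n\ge1$ and all points $v_1,\dots,v_n\in[0,1]^d$, if $T$ is a minimal spanning tree on $v_1,\dots,v_n$ (with respect to Euclidean distance), then \[ \sum_{e\in T}\|e\|^\alpha\le (C\sqrt d)^\alpha\, n^{\max(0,\,1-\alpha/d)}. \]
   Context: A minimal spanning tree (MST) on a finite set of points in a metric space is a spanning tree of the complete graph on those points that minimizes the sum of the edge lengths. $\|e\|$ denotes the Euclidean length of an edge $e$. *)

From Stdlib Require Import Rdefinitions.
From HB Require Import structures.
From mathcomp Require Import all_boot all_order all_algebra.
From mathcomp Require Import all_classical all_reals.
From mathcomp Require Import Rstruct exp.
Set Implicit Arguments. Unset Strict Implicit. Unset Printing Implicit Defensive.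
Import Order.TTheory GRing.Theory Num.Theory.
Local Open Scope ring_scope.

Definition Rpoint (d : nat) := 'I_d -> R.

Definition edist (d : nat) (x y : Rpoint d) : R :=
  Num.sqrt (\sum_(k < d) (x k - y k) ^+ 2).

(* An edge set of the complete graph on 'I_n: ordered pairs (i, j) with i < j,
   each representing the undirected edge {i, j}. *)
Definition edge_set (n : nat) := {set 'I_n * 'I_n}.

Definition adj (n : nat) (E : edge_set n) : rel 'I_n :=
  fun x y => ((x, y) \in E) || ((y, x) \in E).

Definition connected_graph (n : nat) (E : edge_set n) : bool :=
  [forall x : 'I_n, forall y : 'I_n, connect (adj E) x y].

Definition spanning_tree (n : nat) (E : edge_set n) : Prop :=
  [/\ (forall e, e \in E -> (nat_of_ord e.1 < nat_of_ord e.2)%N),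
      connected_graph E &
      (forall e, e \in E -> ~~ connected_graph (E :\ e))].

Definition tree_length (d n : nat) (v : 'I_n -> Rpoint d) (E : edge_set n) : R :=
  \sum_(e in E) edist (v e.1) (v e.2).

Definition is_MST (d n : nat) (v : 'I_n -> Rpoint d) (T : edge_set n) : Prop :=
  spanning_tree T /\
  forall T' : edge_set n, spanning_tree T' -> tree_length v T <= tree_length v T'.

From Stdlib Require Import Rdefinitions.
From HB Require Import structures.
From mathcomp Require Import all_boot all_order all_algebra.
From mathcomp Require Import all_classical all_reals.
From mathcomp Require Import Rstruct exp.
From mathcomp Require Import lra ring.
Import Order.TTheory GRing.Theory Num.Theory.
Local Open Scope ring_scope.
Set Implicit Arguments. Unset Strict Implicit. Unset Printing Implicit Defensive.

(* Deleting an edge [e] of a minimal spanning tree splits the vertices into two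
   sides, and by minimality every segment joining the two sides is at least as
   long as [e].  Comparing the midpoint of [e] with that of a shorter edge [f]
   (whose endpoints lie on one side) gives [|mid e - mid f|^2 >= |e|^2 / 8], so
   the axis-parallel cubes of half-width [|e| / (6 sqrt d)] centred at the
   midpoints are pairwise disjoint.  Counting lattice points in these cubes
   bounds their total volume, whence [sum |e|^d <= (36 sqrt d)^d].  A spanning
   tree has at most [n] edges, so for [alpha >= d] the claim follows from
   [|e| <= 36 sqrt d], and for [alpha < d] from the concavity of [t ^ (alpha/d)]. *)

Section SpanningTrees.
Variable n : nat.
Implicit Types (E F T : edge_set n) (e : 'I_n * 'I_n) (x y z : 'I_n).

Local Notation linked E := (connect (adj E)).

Lemma adj_sym E : symmetric (adj E).
Proof. by move=> x y; rewrite /adj orbC. Qed.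

Lemma linked_sym E : connect_sym (adj E).
Proof. exact: sym_connect_sym (adj_sym E). Qed.

Lemma linked_sub E F x y : E \subset F -> linked E x y -> linked F x y.
Proof.
move=> sEF; apply: connect_sub => u w /orP[] uw; apply: connect1;
by rewrite /adj (fintype.subsetP sEF _ uw) ?orbT.
Qed.

Lemma linked_edge E e : e \in E -> linked E e.1 e.2.
Proof. by move=> eE; apply: connect1; rewrite /adj -surjective_pairing eE. Qed.

Lemma linked_ends E e u w :
  e \in E -> u \in [:: e.1; e.2] -> w \in [:: e.1; e.2] -> linked E u w.
Proof.
move=> eE; rewrite !inE => /orP[]/eqP-> /orP[]/eqP->;
by rewrite ?connect0 ?linked_edge // linked_sym linked_edge.
Qed.

Lemma connected_linked E x y : connected_graph E -> linked E x y.
Proof. by move/forallP/(_ x)/forallP/(_ y). Qed.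

Lemma adj_setD1 E e x y : adj E x y ->
  [|| adj (E :\ e) x y, (x, y) == e | (y, x) == e].
Proof.
by rewrite /adj !in_setD1 => /orP[] ->; case: eqP; case: eqP; rewrite ?orbT.
Qed.

Lemma linked_setD1 E e x y : linked E x y ->
  [|| linked (E :\ e) x y, linked (E :\ e) x e.1 && linked (E :\ e) e.2 y
    | linked (E :\ e) x e.2 && linked (E :\ e) e.1 y].
Proof.
case/connectP=> p + ->; elim/last_ind: p => [|p z IH]; first by rewrite connect0.
rewrite rcons_path last_rcons => /andP[/IH {}IH /(adj_setD1 e)].
set u := last x p in IH *.
case/or3P=> [uz|/eqP uz|/eqP zu].
- have {}uz : linked (E :\ e) u z by apply: connect1.
  by case/or3P: IH => [h|/andP[-> h]|/andP[-> h]]; rewrite (connect_trans h uz) ?orbT.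
- by subst e => /=; case/or3P: IH => [->|/andP[-> _]|/andP[-> _]];
    rewrite connect0 ?orbT.
- by subst e => /=; case/or3P: IH => [->|/andP[-> _]|/andP[-> _]];
    rewrite connect0 ?orbT.
Qed.

Lemma connected_replace E F e : connected_graph E ->
  E :\ e \subset F -> linked F e.1 e.2 -> connected_graph F.
Proof.
move=> conn sEF c12; apply/forallP => x; apply/forallP => y.
case/or3P: (linked_setD1 e (connected_linked x y conn)) => [|/andP[]|/andP[]].
- exact: linked_sub.
- move=> /(linked_sub sEF) x1 /(linked_sub sEF) y2.
  exact: connect_trans x1 (connect_trans c12 y2).
- rewrite linked_sym in c12; move=> /(linked_sub sEF) x2 /(linked_sub sEF) y1.
  exact: connect_trans x2 (connect_trans c12 y1).
Qed.

Lemma spanning_tree_bridge T e :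
  spanning_tree T -> e \in T -> ~~ linked (T :\ e) e.1 e.2.
Proof.
case=> _ conn minT eT; apply: contra (minT e eT).
exact: connected_replace conn (subxx _).
Qed.

Lemma spanning_tree_sides T e z :
  spanning_tree T -> linked (T :\ e) e.1 z || linked (T :\ e) e.2 z.
Proof.
case=> _ conn _; case/or3P: (linked_setD1 e (connected_linked e.1 z conn)).
- by move=> ->.
- by case/andP=> _ ->; rewrite orbT.
- by case/andP=> _ ->.
Qed.

Lemma connected_sub_spanning_tree E :
  connected_graph E -> (forall e, e \in E -> (e.1 < e.2)%N) ->
  exists2 S : edge_set n, S \subset E & spanning_tree S.
Proof.
move=> conn ordE; pose P (S : edge_set n) := (S \subset E) && connected_graph S.
have PE : P E by rewrite /P subxx conn.
have [S /andP[sSE connS] minS] := arg_minnP (fun S : edge_set n => #|S|) PE.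
exists S => //; split=> // [e eS | e eS].
  exact: ordE (fintype.subsetP sSE _ eS).
apply: contraTN isT => connSe; have := minS (S :\ e).
rewrite /P connSe (fintype.subset_trans (finset.subD1set S e) sSE) => /(_ isT).
by rewrite (cardsD1 e S) eS ltnn.
Qed.

(* Sending each edge to its endpoint cut off from the root [r] by deleting it
   is injective, which bounds the number of edges by the number of vertices. *)
Section EdgeCount.
Variables (T : edge_set n) (r : 'I_n).
Hypothesis treeT : spanning_tree T.

Definition far_end e := if linked (T :\ e) r e.1 then e.2 else e.1.

Lemma far_endP e : e \in T -> exists2 p, p \in [:: e.1; e.2] &
  [/\ far_end e \in [:: e.1; e.2], linked (T :\ e) r p & ~~ linked (T :\ e) r (far_end e)].
Proof.
move=> eT; have bridge := spanning_tree_bridge treeT eT.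
rewrite /far_end; case: ifP => re1.
- exists e.1; rewrite ?inE ?eqxx ?orbT //; split; rewrite ?inE ?eqxx ?orbT //.
  by apply: contra bridge; apply: connect_trans; rewrite linked_sym.
- exists e.2; rewrite ?inE ?eqxx ?orbT //; split; rewrite ?inE ?eqxx ?re1 //.
  by have := spanning_tree_sides e r treeT; rewrite !(linked_sym _ _ r) re1.
Qed.

Lemma far_end_inj : {in T &, injective far_end}.
Proof.
move=> e f eT fT efar; apply/eqP; apply: contraT => nef.
have [p pe [ze rp nrz]] := far_endP eT.
have [_ _ [zf _ nrz']] := far_endP fT; rewrite -efar in zf nrz'.
have fTe : f \in T :\ e by rewrite in_setD1 eq_sym nef.
have eTf : e \in T :\ f by rewrite in_setD1 nef.
have sf : T :\ e :\ f \subset T :\ f.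
  by apply/fintype.subsetP => x; rewrite !in_setD1 => /andP[-> /andP[_ ->]].
have se : T :\ e :\ f \subset T :\ e by apply: finset.subD1set.
move: rp; rewrite linked_sym => /(linked_setD1 f) /or3P[h|/andP[_ h]|/andP[_ h]].
- case/negP: nrz'; rewrite linked_sym.
  exact: connect_trans (linked_ends eTf ze pe) (linked_sub sf h).
- case/negP: nrz; rewrite linked_sym.
  by apply: connect_trans (linked_ends fTe zf _) (linked_sub se h); rewrite !inE eqxx orbT.
- case/negP: nrz; rewrite linked_sym.
  by apply: connect_trans (linked_ends fTe zf _) (linked_sub se h); rewrite !inE eqxx.
Qed.

End EdgeCount.

Lemma card_spanning_tree T : spanning_tree T -> (#|T| <= n)%N.
Proof.
case: (posnP n) => [n0 _ | n_gt0 treeT].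
  by apply: leq_trans (max_card _) _; rewrite card_prod card_ord n0.
rewrite -(card_in_imset (@far_end_inj T (Ordinal n_gt0) treeT)).
by apply: leq_trans (max_card _) _; rewrite card_ord.
Qed.

End SpanningTrees.

Section Euclid.
Variable d : nat.
Implicit Types x y z w a b c e : Rpoint d.

Definition sqdist x y := \sum_(k < d) (x k - y k) ^+ 2.

Definition midpoint x y : Rpoint d := fun k => (x k + y k) / 2.

Lemma sqdist_ge0 x y : 0 <= sqdist x y.
Proof. by apply: sumr_ge0 => k _; apply: sqr_ge0. Qed.

Lemma sqdist_sym x y : sqdist x y = sqdist y x.
Proof. by apply: eq_bigr => k _; rewrite -sqrrN opprB. Qed.

Lemma edist_ge0 x y : 0 <= edist x y.
Proof. exact: sqrtr_ge0. Qed.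

Lemma edist_sym x y : edist x y = edist y x.
Proof. by rewrite /edist -/(sqdist x y) sqdist_sym. Qed.

Lemma sqr_edist x y : edist x y ^+ 2 = sqdist x y.
Proof. by rewrite sqr_sqrtr // sqdist_ge0. Qed.

Lemma ler_edist x y z w : (edist x y <= edist z w) = (sqdist x y <= sqdist z w).
Proof. by rewrite /edist ler_sqrt // sqdist_ge0. Qed.

Lemma midpointC x y : midpoint x y = midpoint y x.
Proof. by apply/funext => k; rewrite /midpoint addrC. Qed.

Section UnitCube.
Variables x y : Rpoint d.
Hypotheses (x01 : forall k, 0 <= x k <= 1) (y01 : forall k, 0 <= y k <= 1).

Lemma edist_le_unit_cube : edist x y <= Num.sqrt d%:R.
Proof.
rewrite ler_sqrt // -[X in _ <= X%:R](card_ord d) -sumr_const.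
by apply: ler_sum => k _; move: (x01 k) (y01 k) => /andP[x0 x1] /andP[y0 y1]; nra.
Qed.

Lemma midpoint_unit_cube k : 0 <= midpoint x y k <= 1.
Proof. by move: (x01 k) (y01 k) => /andP[x0 x1] /andP[y0 y1]; rewrite /midpoint; lra. Qed.

End UnitCube.

(* By Apollonius' identity in each coordinate,
   |(a+b)/2 - (c+e)/2|^2 = (|c-b|^2 + |e-b|^2)/4 - |c-e|^2/8 - |a-b|^2/4
                           + |(c+e)/2 - a|^2/2. *)
Lemma sqdist_midpoint_ge a b c e :
  sqdist c e <= sqdist a b -> sqdist a b <= sqdist c b -> sqdist a b <= sqdist e b ->
  sqdist a b / 8 <= sqdist (midpoint a b) (midpoint c e).
Proof.
move=> ce_ab ab_cb ab_eb.
have coordwise k : 4^-1 * (c k - b k) ^+ 2 + 4^-1 * (e k - b k) ^+ 2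
    - 8^-1 * (c k - e k) ^+ 2 - 4^-1 * (a k - b k) ^+ 2
    <= (midpoint a b k - midpoint c e k) ^+ 2.
  rewrite -subr_ge0 /midpoint.
  have -> : ((a k + b k) / 2 - (c k + e k) / 2) ^+ 2 -
    (4^-1 * (c k - b k) ^+ 2 + 4^-1 * (e k - b k) ^+ 2 - 8^-1 * (c k - e k) ^+ 2 -
     4^-1 * (a k - b k) ^+ 2) = 2^-1 * ((c k + e k) / 2 - a k) ^+ 2 by field.
  by rewrite mulr_ge0 ?sqr_ge0 ?invr_ge0 ?ler0n.
apply: le_trans (ler_sum _ (fun k _ => coordwise k)).
rewrite !sumrB big_split /= -!mulr_sumr -/(sqdist c b) -/(sqdist e b) -/(sqdist c e) -/(sqdist a b).
lra.
Qed.

Lemma sqdist_le_max_coord x y : (0 < d)%N ->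
  exists k, sqdist x y <= d%:R * (x k - y k) ^+ 2.
Proof.
move=> d_gt0; pose F k := (x k - y k) ^+ 2.
have [k _ kmax] := @arg_maxP _ _ _ (Ordinal d_gt0) predT F isT.
exists k; rewrite -[X in X%:R * _](card_ord d) -sumr_const mulr_suml.
by apply: ler_sum => j _; rewrite mul1r; apply: kmax.
Qed.

End Euclid.

Section MinimalSpanningTree.
Variables (d n : nat) (v : 'I_n -> Rpoint d).
Local Notation len e := (edist (v e.1) (v e.2)).
Local Notation mid e := (midpoint (v e.1) (v e.2)).
Local Notation linked E := (connect (adj E)).

Lemma tree_length_sub (E F : edge_set n) :
  E \subset F -> tree_length v E <= tree_length v F.
Proof.
move=> sEF; rewrite [X in _ <= X](big_setID E) (finset.setIidPr sEF) /= lerDl.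
by apply: sumr_ge0 => e _; apply: edist_ge0.
Qed.

Lemma tree_length_setU1 (e : 'I_n * 'I_n) (E : edge_set n) :
  tree_length v (e |: E) <= len e + tree_length v E.
Proof.
have [eE|eNE] := boolP (e \in E); last by rewrite /tree_length big_setU1.
by rewrite (finset.setUidPr _) ?finset.sub1set // lerDr edist_ge0.
Qed.

Variable T : edge_set n.
Hypothesis mstT : is_MST v T.

(* Exchange argument: replacing [e] by a segment across the cut yields a
   connected graph, which contains a spanning tree no longer than [T]. *)
Lemma mst_cut e x y : e \in T ->
  linked (T :\ e) e.1 x -> linked (T :\ e) e.2 y -> len e <= edist (v x) (v y).
Proof.
case: mstT => treeT minT eT e1x e2y; have [ordT connT _] := treeT.
have nxy : x != y.
  apply: contraNneq (spanning_tree_bridge treeT eT) => exy.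
  by apply: connect_trans e1x _; rewrite linked_sym exy.
pose e' := if (x < y)%N then (x, y) else (y, x).
pose T' := e' |: (T :\ e).
have ordT' f : f \in T' -> (f.1 < f.2)%N.
  rewrite in_setU1 in_setD1 => /orP[/eqP-> | /andP[_ /ordT]//].
  rewrite /e'; case: (ltngtP x y) => //= exy.
  by case/negP: nxy; apply/eqP/val_inj.
have sT' : T :\ e \subset T' by apply: finset.subsetUr.
have linkT' : linked T' e.1 e.2.
  have xy : linked T' x y.
    by apply: connect1; rewrite /adj /T' /e'; case: ifP; rewrite setU11 ?orbT.
  apply: connect_trans (linked_sub sT' e1x) (connect_trans xy _).
  by rewrite linked_sym; apply: linked_sub sT' e2y.
have [S sST' treeS] :=
  connected_sub_spanning_tree (connected_replace connT sT' linkT') ordT'.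
have lenT : tree_length v T = len e + tree_length v (T :\ e).
  by rewrite /tree_length (big_setD1 e eT).
have lene' : len e' = edist (v x) (v y).
  by rewrite /e'; case: ifP => // _; rewrite edist_sym.
have := le_trans (minT S treeS) (le_trans (tree_length_sub sST') (tree_length_setU1 e' _)).
by rewrite lenT lene' lerD2r.
Qed.

Lemma mst_midpoints_far e f : e \in T -> f \in T -> e != f -> len f <= len e ->
  sqdist (v e.1) (v e.2) / 8 <= sqdist (mid e) (mid f).
Proof.
move=> eT fT nef; rewrite ler_edist => fe.
have linked_f : linked (T :\ e) f.1 f.2.
  by apply: linked_edge; rewrite in_setD1 eq_sym nef.
have cut_e2 z : linked (T :\ e) e.1 z -> sqdist (v e.1) (v e.2) <= sqdist (v z) (v e.2).
  by move=> e1z; rewrite -ler_edist; apply: mst_cut e1z (connect0 _ _).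
have cut_e1 z : linked (T :\ e) e.2 z -> sqdist (v e.2) (v e.1) <= sqdist (v z) (v e.1).
  move=> e2z; rewrite sqdist_sym [X in _ <= X]sqdist_sym -ler_edist.
  exact: mst_cut (connect0 _ _) e2z.
case/orP: (spanning_tree_sides e f.1 mstT.1) => side.
- exact: sqdist_midpoint_ge fe (cut_e2 _ side) (cut_e2 _ (connect_trans side linked_f)).
- rewrite midpointC [sqdist (v e.1) _]sqdist_sym.
  apply: sqdist_midpoint_ge (cut_e1 _ side) (cut_e1 _ (connect_trans side linked_f)).
  by rewrite [X in _ <= X]sqdist_sym.
Qed.

Lemma mst_cubes_disjoint e f : (0 < d)%N -> e \in T -> f \in T -> e != f ->
  exists k, (len e + len f) / (6 * Num.sqrt d%:R) <= `|mid e k - mid f k|.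
Proof.
move=> d_gt0; wlog fe : e f / len f <= len e.
  move=> W eT fT nef; have [fe|/ltW ef] := lerP (len f) (len e); first exact: W.
  have [|k fek] := W f e ef fT eT; first by rewrite eq_sym.
  by exists k; rewrite addrC distrC.
move=> eT fT nef; set s := Num.sqrt d%:R.
have s_gt0 : 0 < s by rewrite sqrtr_gt0 ltr0n.
have [k far_k] := sqdist_le_max_coord (mid e) (mid f) d_gt0.
exists k; set D := mid e k - mid f k.
have far : len e ^+ 2 <= 8 * (s ^+ 2 * D ^+ 2).
  have := le_trans (mst_midpoints_far eT fT nef fe) far_k.
  by rewrite -/D sqr_edist /s sqr_sqrtr ?ler0n //; lra.
have le_e : len e <= 3 * s * `|D|.
  have e_nneg : len e \is Num.nneg by rewrite nnegrE edist_ge0.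
  have D_nneg : 3 * s * `|D| \is Num.nneg by rewrite nnegrE !mulr_ge0 ?normr_ge0 ?ltW ?ler0n.
  rewrite -(ler_sqr e_nneg D_nneg) !exprMn real_normK ?num_real //; nra.
rewrite ler_pdivrMr ?mulr_gt0 //.
have := edist_ge0 (v f.1) (v f.2); lra.
Qed.

End MinimalSpanningTree.

(* Cubes are discretised on a grid of mesh [1 / K], with [K] so large that each
   cube of positive size has [side i >= h i * K / 2] grid points per side; when
   [h i = 0] the junk value [2 / h i = 0] is harmless and the cube has no
   grid points. *)
Section CubePacking.
Variables (d : nat) (I : finType) (c : I -> Rpoint d) (h : I -> R).
Hypotheses (d_gt0 : (0 < d)%N)
  (c01 : forall i k, 0 <= c i k <= 1) (h01 : forall i, 0 <= h i <= 1)
  (h_sep : forall i j, i != j -> 0 < h i -> 0 < h j ->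
     exists k, h i + h j <= `|c i k - c j k|).

Let K := (\sum_i Num.truncn (2 / h i)).+1.
Let side i := Num.truncn (h i * K%:R).
Let corner i k := (Num.truncn ((c i k - h i + 1) * K%:R)).+1.
Let N := (2 * K).+1.

Let K_gt0 : 0 < K%:R :> R.
Proof. by rewrite ltr0n. Qed.

Let side_le i : (side i)%:R <= h i * K%:R.
Proof. by rewrite truncn_le mulr_ge0 ?ler0n //; case/andP: (h01 i). Qed.

Let side_ge i : h i * K%:R / 2 <= (side i)%:R.
Proof.
have [h0|h_neq0] := eqVneq (h i) 0; first by rewrite h0 !mul0r ler0n.
have h_gt0 : 0 < h i by rewrite lt_def h_neq0; case/andP: (h01 i).
have two_le : 2 <= h i * K%:R.
  rewrite mulrC -ler_pdivrMr //; apply: ltW; apply: lt_le_trans (truncnS_gt _) _.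
  by rewrite ler_nat ltnS (bigD1 i) //= leq_addr.
have := truncnS_gt (h i * K%:R); rewrite -/(side i) -natr1; lra.
Qed.

Let grid_bounds i k (j : nat) : (j < side i)%N ->
  (c i k - h i + 1) * K%:R < (corner i k + j)%:R <= (c i k + 1) * K%:R.
Proof.
rewrite -(ler_nat R) -natr1 => j_lt; have s_le := side_le i.
set x := (c i k - h i + 1) * K%:R.
have x_ge0 : 0 <= x.
  rewrite mulr_ge0 ?ler0n //.
  by move: (c01 i k) (h01 i) => /andP[c0 c1] /andP[h0 h1]; lra.
have lo := truncnS_gt x; have hi : (Num.truncn x)%:R <= x by rewrite truncn_le.
have eqK : (c i k + 1) * K%:R = x + h i * K%:R by rewrite /x; ring.
have j_ge0 : 0 <= j%:R :> R by rewrite ler0n.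
rewrite eqK /corner natrD -natr1; move: lo; rewrite -natr1 => lo.
by apply/andP; split; lra.
Qed.

Let grid_point_lt i k (j : nat) : (j < side i)%N -> (corner i k + j < N)%N.
Proof.
move=> /(@grid_bounds i k j)/andP[_ hi]; rewrite ltnS -(ler_nat R) natrM.
by apply: le_trans hi _; rewrite ler_pM2r //; case/andP: (c01 i k) => _; lra.
Qed.

Let grid_point i : ({ffun 'I_d -> 'I_(side i)}) -> {ffun 'I_d -> 'I_N} :=
  fun g => [ffun k => inord (corner i k + g k)].
Arguments grid_point : clear implicits.

Let grid_pointE i (g : {ffun 'I_d -> 'I_(side i)}) k :
  grid_point i g k = (corner i k + g k)%N :> nat.
Proof. by rewrite ffunE inordK // grid_point_lt. Qed.

Let cube_points i := [set grid_point i g | g : {ffun 'I_d -> 'I_(side i)}].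

Let grid_point_inj i : injective (grid_point i).
Proof.
move=> g1 g2 /ffunP eq_g; apply/ffunP => k; apply: val_inj.
by have := congr1 (@nat_of_ord _) (eq_g k); rewrite !grid_pointE => /addnI.
Qed.

Let h_gt0_side i : (0 < side i)%N -> 0 < h i.
Proof.
rewrite -(ltr_nat R) => s_gt0; rewrite -(pmulr_lgt0 _ K_gt0).
exact: lt_le_trans s_gt0 (side_le i).
Qed.

Let cube_points_disjoint i j : i != j ->
  [disjoint cube_points i & cube_points j].
Proof.
move=> nij; rewrite -setI_eq0; apply/set0Pn.
case=> _ /setIP[/imsetP[g _ ->] /imsetP[g' _ /ffunP eq_g]].
have pos l (f : {ffun 'I_d -> 'I_(side l)}) : 0 < h l.
  exact: h_gt0_side (leq_ltn_trans (leq0n _) (ltn_ord (f (Ordinal d_gt0)))).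
have [k sep] := h_sep nij (pos i g) (pos j g').
have := congr1 (@nat_of_ord _) (eq_g k); rewrite !grid_pointE => eq_val.
have /andP[lo_i hi_i] := grid_bounds k (ltn_ord (g k)).
have /andP[lo_j hi_j] := grid_bounds k (ltn_ord (g' k)).
rewrite eq_val in lo_i hi_i.
have ij := lt_le_trans lo_i hi_j; have ji := lt_le_trans lo_j hi_i.
rewrite ltr_pM2r // in ij; rewrite ltr_pM2r // in ji.
have : `|c i k - c j k| < h i + h j.
  rewrite ltr_norml; move: (h01 i) (h01 j) => /andP[hi0 _] /andP[hj0 _].
  by apply/andP; split; lra.
by rewrite ltNge sep.
Qed.

Let sum_side_le : (\sum_i side i ^ d <= N ^ d)%N.
Proof.
have card_cube i : #|cube_points i| = (side i ^ d)%N.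
  by rewrite card_imset ?card_ffun ?card_ord //; apply: grid_point_inj.
have -> : (\sum_i side i ^ d = #|\bigcup_i cube_points i|)%N.
  rewrite -sum1_card (partition_disjoint_bigcup _ _ cube_points_disjoint).
  by apply: eq_bigr => i _; rewrite sum1_card card_cube.
by apply: leq_trans (max_card _) _; rewrite card_ffun !card_ord.
Qed.

Lemma cube_packing : \sum_i h i ^+ d <= 6 ^+ d.
Proof.
have K2_gt0 : 0 < K%:R / 2 :> R by rewrite divr_gt0.
have hK_le : \sum_i (h i * (K%:R / 2)) ^+ d <= N%:R ^+ d.
  apply: le_trans (_ : \sum_i (side i)%:R ^+ d <= _).
    apply: ler_sum => i _; rewrite lerXn2r ?nnegrE ?ler0n ?mulrA ?side_ge //.
    by have /andP[h0 _] := h01 i; rewrite !mulr_ge0 ?invr_ge0 ?ler0n.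
  by under eq_bigr do rewrite -natrX; rewrite -natr_sum -natrX ler_nat.
have N_le : N%:R <= 6 * (K%:R / 2) :> R.
  rewrite /N -natr1 natrM; have : 1 <= K%:R :> R by rewrite ler1n.
  by lra.
rewrite -(ler_pM2r (exprn_gt0 d K2_gt0)) mulr_suml -exprMn.
under eq_bigr do rewrite -exprMn.
apply: le_trans hK_le _; apply: lerXn2r => //; rewrite nnegrE ?ler0n //.
by rewrite mulr_ge0 ?ltW.
Qed.

End CubePacking.

(* Young's inequality [a b <= p a^(1/p) + (1 - p) b^(1/(1-p))] applied to
   [a = (x t^(p-1))^p] and [b = t^(p(1-p))]. *)
Lemma powR_le_tangent (p x t : R) : 0 < p -> p < 1 -> 0 <= x -> 0 < t ->
  x `^ p <= (1 - p) * t `^ p + p * t `^ (p - 1) * x.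
Proof.
move=> p_gt0 p_lt1 x_ge0 t_gt0.
have pi_gt0 : 0 < p^-1 by rewrite invr_gt0.
have q_gt0 : 0 < 1 - p by rewrite subr_gt0.
have qi_gt0 : 0 < (1 - p)^-1 by rewrite invr_gt0.
pose a := (x * t `^ (p - 1)) `^ p; pose b := t `^ (p * (1 - p)).
have pq : p^-1^-1 + (1 - p)^-1^-1 = 1 by rewrite !invrK addrC subrK.
have young := conjugate_powR (powR_ge0 (x * t `^ (p - 1)) p)
  (powR_ge0 t (p * (1 - p))) pi_gt0 qi_gt0 pq.
have ab : a * b = x `^ p.
  rewrite /a /b powRM ?powR_ge0 // -powRrM -mulrA -powRD ?(gt_eqF t_gt0) ?implybT //.
  by rewrite (_ : (p - 1) * p + p * (1 - p) = 0) ?powRr0 ?mulr1 //; ring.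
have aP : a `^ p^-1 / p^-1 = p * t `^ (p - 1) * x.
  by rewrite /a -powRrM mulfV ?gt_eqF // powRr1 ?mulr_ge0 ?powR_ge0 // invrK; ring.
have bQ : b `^ (1 - p)^-1 / (1 - p)^-1 = (1 - p) * t `^ p.
  by rewrite /b -powRrM -mulrA mulfV ?gt_eqF // mulr1 invrK; ring.
by rewrite -ab addrC -aP -bQ.
Qed.

Section PowerSums.
Variables (I : finType) (A : {set I}) (x : I -> R) (d : nat) (L : R).
Hypotheses (d_gt0 : (0 < d)%N) (L_gt0 : 0 < L)
  (x_range : forall i, i \in A -> 0 <= x i <= L)
  (sum_expr_le : \sum_(i in A) x i ^+ d <= L ^+ d).

Let x_ge0 i : i \in A -> 0 <= x i.
Proof. by case/x_range/andP. Qed.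

Lemma sum_powR_le_large alpha : d%:R <= alpha ->
  \sum_(i in A) x i `^ alpha <= L `^ alpha.
Proof.
move=> d_le; have alpha_gt0 : 0 < alpha by apply: lt_le_trans d_le; rewrite ltr0n.
have step i : i \in A -> x i `^ alpha <= x i ^+ d * L `^ (alpha - d%:R).
  move=> iA; have [->|xi_neq0] := eqVneq (x i) 0.
    by rewrite powR0 ?gt_eqF // mulr_ge0 ?powR_ge0 // expr0n gtn_eqF.
  rewrite -{1}(subrKC d%:R alpha) powRD ?xi_neq0 ?implybT // powR_mulrn ?x_ge0 //.
  rewrite ler_wpM2l ?exprn_ge0 ?x_ge0 //; case/andP: (x_range iA) => xi_ge0 xi_le.
  by apply: ge0_ler_powR; rewrite ?nnegrE ?subr_ge0 // ltW.
apply: le_trans (ler_sum _ step) _; rewrite -mulr_suml.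
apply: le_trans (ler_wpM2r (powR_ge0 _ _) sum_expr_le) _.
have L_ge0 := ltW L_gt0.
by rewrite -powR_mulrn // -powRD ?gt_eqF // subrKC.
Qed.

Lemma sum_powR_le_small alpha n : 0 < alpha -> alpha < d%:R ->
  (0 < n)%N -> (#|A| <= n)%N ->
  \sum_(i in A) x i `^ alpha <= L `^ alpha * n%:R `^ (1 - alpha / d%:R).
Proof.
move=> alpha_gt0 alpha_lt n_gt0 card_le; have d_gt0R : 0 < d%:R :> R by rewrite ltr0n.
set p := alpha / d%:R; have p_gt0 : 0 < p by rewrite divr_gt0.
have p_lt1 : p < 1 by rewrite ltr_pdivrMr // mul1r.
have n_gt0R : 0 < n%:R :> R by rewrite ltr0n.
set t := L ^+ d / n%:R; have t_gt0 : 0 < t by rewrite divr_gt0 ?exprn_gt0.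
have step i : i \in A ->
    x i `^ alpha <= (1 - p) * t `^ p + p * t `^ (p - 1) * x i ^+ d.
  move=> iA; have -> : x i `^ alpha = (x i ^+ d) `^ p.
    by rewrite -powR_mulrn ?x_ge0 // -powRrM /p mulrC divfK ?gt_eqF.
  exact: powR_le_tangent (exprn_ge0 _ (x_ge0 iA)) t_gt0.
apply: le_trans (ler_sum _ step) _.
rewrite big_split /= sumr_const -mulr_sumr.
have p_t_ge0 : 0 <= p * t `^ (p - 1) by rewrite mulr_ge0 ?powR_ge0 // ltW.
apply: le_trans (lerD (_ : _ <= n%:R * ((1 - p) * t `^ p)) (ler_wpM2l p_t_ge0 sum_expr_le)) _.
  rewrite mulr_natl; apply: ler_wpMn2l card_le.
  by rewrite mulr_ge0 ?powR_ge0 // subr_ge0 ltW.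
have -> : p * t `^ (p - 1) * L ^+ d = n%:R * (p * t `^ p).
  rewrite (_ : L ^+ d = t * n%:R); last by rewrite /t divfK ?gt_eqF.
  by rewrite -(mulr_powRB1 (ltW t_gt0) p_gt0); ring.
rewrite -mulrDr (_ : (1 - p) * t `^ p + p * t `^ p = t `^ p); last by ring.
have L_ge0 := ltW L_gt0.
rewrite /t powRM ?invr_ge0 ?ler0n ?exprn_ge0 // -powR_mulrn //.
rewrite -powRrM (_ : d%:R * p = alpha); last by rewrite /p mulrC divfK ?gt_eqF.
rewrite mulrCA; apply: ler_wpM2l; first exact: powR_ge0.
rewrite -(powR_inv1 (ltW n_gt0R)) -powRrM -[X in X * _](powRr1 (ltW n_gt0R)).
by rewrite -powRD ?(gt_eqF n_gt0R) ?implybT // mulN1r.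
Qed.

End PowerSums.

Lemma mst_sum_expr_le d n (v : 'I_n -> Rpoint d) (T : edge_set n) :
  (0 < d)%N -> (forall i k, 0 <= v i k <= 1) -> is_MST v T ->
  \sum_(e in T) edist (v e.1) (v e.2) ^+ d <= (36 * Num.sqrt d%:R) ^+ d.
Proof.
move=> d_gt0 v01 mstT; set s := Num.sqrt d%:R.
have s_gt0 : 0 < s by rewrite sqrtr_gt0 ltr0n.
have s6_gt0 : 0 < 6 * s by rewrite mulr_gt0.
pose h e := if e \in T then edist (v e.1) (v e.2) / (6 * s) else 0.
have h01 e : 0 <= h e <= 1.
  rewrite /h; case: ifP => _; last by rewrite lexx ler01.
  rewrite divr_ge0 ?edist_ge0 ?(ltW s6_gt0) //= ler_pdivrMr // mul1r.
  by apply: le_trans (edist_le_unit_cube (v01 _) (v01 _)) _; rewrite -/s; lra.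
have c01 e k : 0 <= midpoint (v e.1) (v e.2) k <= 1.
  exact: midpoint_unit_cube.
have sep e f : e != f -> 0 < h e -> 0 < h f ->
    exists k, h e + h f <= `|midpoint (v e.1) (v e.2) k - midpoint (v f.1) (v f.2) k|.
  rewrite /h; case: ifP => eT; last by rewrite ltxx.
  case: ifP => fT; last by rewrite ltxx.
  move=> nef _ _; have [k far_k] := mst_cubes_disjoint mstT d_gt0 eT fT nef.
  by exists k; rewrite -mulrDl.
have -> : \sum_(e in T) edist (v e.1) (v e.2) ^+ d = (6 * s) ^+ d * \sum_e h e ^+ d.
  rewrite mulr_sumr big_mkcond /=; apply: eq_bigr => e _; rewrite /h.
  by case: ifP => _; rewrite -exprMn ?mulr0 ?expr0n ?gtn_eqF // mulrC divfK ?gt_eqF.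
rewrite (_ : 36 * s = 6 * s * 6); last by ring.
rewrite [X in _ <= X]exprMn ler_wpM2l ?exprn_ge0 ?(ltW s6_gt0) //.
exact: cube_packing d_gt0 c01 h01 sep.
Qed.

Theorem mainTheorem2 :
  exists C : R, 0 < C /\
  forall (d : nat) (alpha : R) (n : nat) (v : 'I_n -> Rpoint d) (T : edge_set n),
    (1 <= d)%N -> 0 < alpha -> (1 <= n)%N ->
    (forall (i : 'I_n) (k : 'I_d), 0 <= v i k <= 1) ->
    is_MST v T ->
    \sum_(e in T) (edist (v e.1) (v e.2)) `^ alpha
      <= (C * Num.sqrt (d%:R)) `^ alpha
         * (n%:R) `^ (Num.max 0 (1 - alpha / d%:R)).
Proof.
exists 36; split=> // d alpha n v T d_gt0 alpha_gt0 n_gt0 v01 mstT.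
have s_gt0 : 0 < Num.sqrt d%:R :> R by rewrite sqrtr_gt0 ltr0n.
have L_gt0 : 0 < 36 * Num.sqrt d%:R :> R by rewrite mulr_gt0.
have len_range e : e \in T -> 0 <= edist (v e.1) (v e.2) <= 36 * Num.sqrt d%:R.
  move=> _; rewrite edist_ge0 /=.
  by apply: le_trans (edist_le_unit_cube (v01 _) (v01 _)) _; lra.
have sum_le := mst_sum_expr_le d_gt0 v01 mstT.
have d_gt0R : 0 < d%:R :> R by rewrite ltr0n.
have [d_le|alpha_lt] := lerP d%:R alpha.
- rewrite max_l ?powRr0 ?mulr1.
    exact (sum_powR_le_large d_gt0 L_gt0 len_range sum_le d_le).
  by rewrite subr_le0 ler_pdivlMr // mul1r.
- rewrite max_r; last by rewrite subr_ge0 ler_pdivrMr // mul1r ltW.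
  have card_le := card_spanning_tree mstT.1.
  exact (sum_powR_le_small d_gt0 L_gt0 len_range sum_le alpha_gt0 alpha_lt n_gt0 card_le).
Qed.
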